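(* Let $T = \{t_1,\dots,t_n\}$ be a set of finite traces over $\Sigma = 2^{\mathrm{AP}}$ and let $\varphi = \forall\pi_1\dots\forall\pi_{k_T}.\ \psi$ be a universally-safe HyperLTL formula. Then $T$ is a bad prefix of $\varphi$ (i.e., $T \in \mathrm{Bad}(\mathcal{L}(\varphi))$) if and only if the HyperLTL formula $$\varphi' := \exists\pi'_1\dots\exists\pi'_n\ \forall\pi_1\dots\forall\pi_{k_T}.\ \pi'_1 \ge t_1 \wedge \dots \wedge \pi'_n \ge t_n \wedge \psi$$ is unsatisfiable.
   Context: HyperLTL formulas over a set of atomic propositions AP are generated by $\psi ::= \exists\pi.\psi \mid \forall\pi.\psi \mid \phi$, $\phi ::= a_\pi \mid \neg\phi \mid \phi\vee\phi \mid \bigcirc\phi \mid \phi\,\mathcal{U}\,\phi$. For $T \subseteq \Sigma^\omega$ and a trace assignment $\Pi$: $\Pi \models_T \exists\pi.\psi$ iff some $t \in T$ has $\Pi[\pi\mapsto t]\models_T\psi$; $\forall$ dually; $\Pi\models_T a_\pi$ iff $a \in \Pi(\pi)[0]$; Boolean connectives as usual; $\Pi\models_T\bigcirc\phi$ iff $\Pi[1,\infty]\models_T\phi$; $\Pi\models_T\phi_1\mathcal{U}\phi_2$ iff $\exists i\ge0$ with $\Pi[i,\infty]\models_T\phi_2$ and $\Pi[j,\infty]\models_T\phi_1$ for all $j<i$. $T$ satisfies $\varphi$ if the empty assignment satisfies it; $\mathcal{L}(\varphi) = \{T \subseteq \Sigma^\omega \mid T \text{ satisfies } \varphi\}$; a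 formula is satisfiable if some (nonempty) set of traces satisfies it. A universally-safe HyperLTL formula has the form $\forall\pi_1\dots\forall\pi_k.\psi$ with $\psi$ a quantifier-free safety formula. For a trace variable $\pi'$ and finite trace $t = t[0]\cdots t[m-1]$, $\pi' \ge t$ abbreviates the quantifier-free formula $\bigwedge_{j<m}\bigcirc^j\big(\bigwedge_{a\in t[j]} a_{\pi'} \wedge \bigwedge_{a \notin t[j]} \neg a_{\pi'}\big)$, stating that $t$ is a prefix of the trace bound to $\pi'$. For finite $T \subseteq \Sigma^*$ and $T' \subseteq \Sigma^\omega$, $T \le T'$ means every $t \in T$ is a prefix of some $t' \in T'$; $\mathrm{Bad}(\mathbf{S}) = \{T \text{ finite} \mid \forall T'.\ T \le T' \Rightarrow T' \notin \mathbf{S}\}$. *)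

From mathcomp Require Import all_boot.
Set Implicit Arguments. Unset Strict Implicit. Unset Printing Implicit Defensive.

Section HyperLTL.
Variable AP : finType.

Definition letter := {set AP}.
Definition trace := nat -> letter.
Definition ftrace := seq letter.

Definition tvar := nat.

Inductive qf :=
| QAtom of AP & tvar
| QNeg of qf
| QOr of qf & qf
| QNext of qf
| QUntil of qf & qf.

Inductive hform :=
| HEx of tvar & hform
| HAll of tvar & hform
| HQF of qf.

Definition assignment := tvar -> option trace.
Definition empty_assignment : assignment := fun _ => None.
Definition upd (Pi : assignment) (x : tvar) (t : trace) : assignment :=
  fun y => if y == x then Some t else Pi y.
Definition shift (i : nat) (Pi : assignment) : assignment :=
  fun y => omap (fun t : trace => fun n => t (i + n)) (Pi y).

Fixpoint qsat (Pi : assignment) (f : qf) : Prop :=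
  match f with
  | QAtom a x => exists t, Pi x = Some t /\ a \in t 0
  | QNeg g => ~ qsat Pi g
  | QOr g h => qsat Pi g \/ qsat Pi h
  | QNext g => qsat (shift 1 Pi) g
  | QUntil g h => exists i, qsat (shift i Pi) h /\
                   forall j, j < i -> qsat (shift j Pi) g
  end.

Definition tset := trace -> Prop.

Fixpoint hsat (T : tset) (Pi : assignment) (f : hform) : Prop :=
  match f with
  | HEx x g => exists t, T t /\ hsat T (upd Pi x t) g
  | HAll x g => forall t, T t -> hsat T (upd Pi x t) g
  | HQF g => qsat Pi g
  end.

Definition satisfies (T : tset) (f : hform) : Prop := hsat T empty_assignment f.
Definition lang (f : hform) : tset -> Prop := fun T => satisfies T f.
Definition satisfiable (f : hform) : Prop :=
  exists T : tset, (exists t, T t) /\ satisfies T f.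

Definition QAnd (f g : qf) : qf := QNeg (QOr (QNeg f) (QNeg g)).

Fixpoint vars_lt (k : nat) (f : qf) : bool :=
  match f with
  | QAtom _ x => x < k
  | QNeg g | QNext g => vars_lt k g
  | QOr g h | QUntil g h => vars_lt k g && vars_lt k h
  end.

Definition env (k : nat) (w : nat -> trace) : assignment :=
  fun x => if x < k then Some (w x) else None.

Definition safety_qf (k : nat) (psi : qf) : Prop :=
  forall w : nat -> trace, ~ qsat (env k w) psi ->
    exists i, forall w' : nat -> trace,
      (forall x, x < k -> forall j, j < i -> w' x j = w x j) ->
      ~ qsat (env k w') psi.

(* forall pi_1 ... forall pi_k. psi, with pi_j := j-1 *)
Definition univ_formula (k : nat) (psi : qf) : hform :=
  foldr HAll (HQF psi) (iota 0 k).

Definition universally_safe (k : nat) (psi : qf) : Prop :=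
  vars_lt k psi /\ safety_qf k psi.

Definition is_prefix (t : ftrace) (t' : trace) : Prop :=
  forall j, j < size t -> nth set0 t j = t' j.
Definition fle (T : seq ftrace) (T' : tset) : Prop :=
  forall t, t \in T -> exists t', T' t' /\ is_prefix t t'.
Definition Bad (S : tset -> Prop) (T : seq ftrace) : Prop :=
  forall T' : tset, fle T T' -> ~ S T'.

(* pi' >= t : the list of conjuncts  X^j (a_pi')  /  X^j (~ a_pi')
   for j < |t| and a in AP *)
Definition lit (x : tvar) (l : letter) (a : AP) : qf :=
  if a \in l then QAtom a x else QNeg (QAtom a x).
Definition prefix_conjuncts (x : tvar) (t : ftrace) : seq qf :=
  flatten [seq [seq iter j QNext (lit x (nth set0 t j) a) | a <- enum AP]
          | j <- iota 0 (size t)].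

(* phi' := exists pi'_1..pi'_n forall pi_1..pi_k.
             pi'_1 >= t_1 /\ ... /\ pi'_n >= t_n /\ psi
   with pi_j := j-1 and pi'_i := k + (i-1). *)
Definition phi_prime (k : nat) (ts : seq ftrace) (psi : qf) : hform :=
  let body := foldr QAnd psi
      (flatten [seq prefix_conjuncts (k + i) (nth [::] ts i)
               | i <- iota 0 (size ts)]) in
  foldr HEx (foldr HAll (HQF body) (iota 0 k)) (iota k (size ts)).

End HyperLTL.

(* A model of phi' is a set of traces containing an extension of every t_i
   (the witnesses for the pi'_i) and satisfying the universal part; since psi
   does not mention the pi'_i, that part says exactly that the set lies in
   L(phi).  So the models of phi' are precisely the extensions of T in L(phi),
   all of which are nonempty because T is. *)
From Stdlib Require Import List Classical FunctionalExtensionality IndefiniteDescription.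
From mathcomp Require Import all_boot zify.
Set Implicit Arguments. Unset Strict Implicit. Unset Printing Implicit Defensive.

Lemma Forall_flatten (X : Type) (P : X -> Prop) (ss : seq (seq X)) :
  Forall P (flatten ss) <-> Forall (Forall P) ss.
Proof.
elim: ss => [|s ss IH] /=; first by rewrite !Forall_nil_iff.
by rewrite Forall_cons_iff -IH; exact: Forall_app.
Qed.

Lemma Forall_mapP (X : eqType) (Y : Type) (P : Y -> Prop) (g : X -> Y) (s : seq X) :
  Forall P [seq g x | x <- s] <-> forall x, x \in s -> P (g x).
Proof.
elim: s => [|y s IH] /=; first by rewrite Forall_nil_iff.
rewrite Forall_cons_iff IH; split=> [[Py Ps] x|Ps].
  by rewrite inE => /predU1P[->|]; [|apply: Ps].
by split=> [|x x_s]; apply: Ps; rewrite inE ?eqxx ?x_s ?orbT.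
Qed.

Section Semantics.
Variable AP : finType.
Implicit Types (Pi : assignment AP) (T : tset AP) (f : hform AP) (g : qf AP).

Definition upd_range Pi (a m : nat) (w : nat -> trace AP) : assignment AP :=
  fun y => if a <= y < a + m then Some (w y) else Pi y.

Lemma upd_range0 Pi a w : upd_range Pi a 0 w = Pi.
Proof. by apply: functional_extensionality => y; rewrite /upd_range; case: ifP => //; lia. Qed.

Lemma upd_range_upd Pi a m t w :
  upd_range (upd Pi a t) a.+1 m w =
  upd_range Pi a m.+1 (fun z => if z == a then t else w z).
Proof.
apply: functional_extensionality => y; rewrite /upd_range /upd.
case: (eqVneq y a) => [->|ne_ya]; first by rewrite ltnn /=; case: ifP => //; lia.
by case: ifP; case: ifP => //; lia.
Qed.

Lemma upd_range_upd_self Pi a m w :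
  upd_range (upd Pi a (w a)) a.+1 m w = upd_range Pi a m.+1 w.
Proof.
rewrite upd_range_upd; congr upd_range.
by apply: functional_extensionality => z; case: eqP => [->|].
Qed.

Lemma hsat_foralls T Pi f a m :
  hsat T Pi (foldr (@HAll AP) f (iota a m)) <->
  forall w, (forall x, a <= x < a + m -> T (w x)) -> hsat T (upd_range Pi a m w) f.
Proof.
elim: m a Pi => [|m IH] a Pi /=.
  split=> [Hf w _|Hf]; first by rewrite upd_range0.
  by rewrite -(upd_range0 Pi a (fun _ _ => set0)); apply: Hf => x; lia.
split=> [Hf w Tw | Hf t Tt].
- rewrite -upd_range_upd_self; apply: (IH _ _).1 => [|x x_in]; [apply: Hf|]; apply: Tw; lia.
- apply/IH => w Tw; rewrite upd_range_upd; apply: Hf => x x_in.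
  by case: eqP => // /eqP ne_xa; apply: Tw; move: ne_xa; lia.
Qed.

Lemma hsat_exists T Pi f a m :
  hsat T Pi (foldr (@HEx AP) f (iota a m)) <->
  exists w, (forall x, a <= x < a + m -> T (w x)) /\ hsat T (upd_range Pi a m w) f.
Proof.
elim: m a Pi => [|m IH] a Pi /=.
  split=> [Hf|[w [_ Hf]]]; last by rewrite upd_range0 in Hf.
  by exists (fun _ _ => set0); rewrite upd_range0; split => // x; lia.
split=> [[t [Tt /IH [w [Tw Hf]]]] | [w [Tw Hf]]].
- rewrite upd_range_upd in Hf; eexists; split; last exact: Hf.
  by move=> x x_in /=; case: eqP => // /eqP ne_xa; apply: Tw; move: ne_xa; lia.
- exists (w a); split; first by apply: Tw; lia.
  apply/IH; exists w; split; last by rewrite upd_range_upd_self.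
  by move=> x x_in; apply: Tw; lia.
Qed.

Lemma shift0 Pi : shift 0 Pi = Pi.
Proof. by apply: functional_extensionality => y; rewrite /shift; case: (Pi y). Qed.

Lemma shiftD i j Pi : shift i (shift j Pi) = shift (j + i) Pi.
Proof.
apply: functional_extensionality => y; rewrite /shift; case: (Pi y) => //= t.
by congr Some; apply: functional_extensionality => n; rewrite addnA.
Qed.

Lemma qsat_iter_next Pi j g : qsat Pi (iter j (@QNext AP) g) <-> qsat (shift j Pi) g.
Proof.
elim: j Pi => [|j IH] Pi /=; first by rewrite shift0.
by rewrite IH shiftD add1n.
Qed.

Lemma qsat_and Pi g h : qsat Pi (QAnd g h) <-> qsat Pi g /\ qsat Pi h.
Proof. by rewrite /QAnd /=; tauto. Qed.

Lemma qsat_foldr_and Pi g l :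
  qsat Pi (foldr (@QAnd AP) g l) <-> Forall (qsat Pi) l /\ qsat Pi g.
Proof.
elim: l => [|h l IH]; first by rewrite /= Forall_nil_iff; tauto.
by apply: iff_trans (qsat_and _ _ _) _; rewrite IH Forall_cons_iff; tauto.
Qed.

Lemma qsat_lit Pi x t l a :
  Pi x = Some t -> qsat Pi (lit x l a) <-> (a \in t 0) = (a \in l).
Proof.
rewrite /lit => Pi_x; case: ifP => a_l /=.
  split=> [[u [Pi_u u0_a]]|t0_a]; last by exists t.
  by move: Pi_u u0_a; rewrite Pi_x => -[<-].
split=> [not_t0_a|t0_a [u [Pi_u u0_a]]].
  by apply/negbTE/negP => t0_a; apply: not_t0_a; exists t.
by move: Pi_u u0_a; rewrite Pi_x => -[<-]; rewrite t0_a.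
Qed.

Lemma qsat_eq_vars_lt k g Pi1 Pi2 :
  vars_lt k g -> (forall x, x < k -> Pi1 x = Pi2 x) -> qsat Pi1 g <-> qsat Pi2 g.
Proof.
elim: g Pi1 Pi2 => [a x|g IH|g IHg h IHh|g IH|g IHg h IHh] Pi1 Pi2 /=.
- by move=> x_lt eq_Pi; rewrite eq_Pi.
- by move=> g_lt eq_Pi; rewrite (IH _ _ g_lt eq_Pi).
- by move=> /andP[g_lt h_lt] eq_Pi; rewrite (IHg _ _ g_lt eq_Pi) (IHh _ _ h_lt eq_Pi).
- by move=> g_lt eq_Pi; apply: IH => // y y_lt; rewrite /shift eq_Pi.
- move=> /andP[g_lt h_lt] eq_Pi.
  have eq_shift i y : y < k -> shift i Pi1 y = shift i Pi2 y.
    by move=> y_lt; rewrite /shift eq_Pi.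
  split=> -[i [Hh Hg]]; exists i; split=> [|j j_lt];
    by [apply/(IHh _ _ h_lt (eq_shift i)) | apply/(IHg _ _ g_lt (eq_shift j)); apply: Hg].
Qed.

Lemma qsat_prefix_conjuncts Pi x t t' :
  Pi x = Some t' -> Forall (qsat Pi) (prefix_conjuncts x t) <-> is_prefix t t'.
Proof.
move=> Pi_x; rewrite /prefix_conjuncts Forall_flatten Forall_mapP.
have qsat_letter j a : qsat Pi (iter j (@QNext AP) (lit x (nth set0 t j) a)) <->
                        (a \in t' j) = (a \in nth set0 t j).
  by rewrite qsat_iter_next (qsat_lit (t := fun n => t' (j + n))) ?addn0 // /shift Pi_x.
split=> [Ht j j_lt | pre j].
- apply/setP => a; apply/esym/qsat_letter.
  have := Ht j; rewrite mem_iota add0n j_lt => /(_ isT).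
  by move/Forall_mapP; apply; rewrite mem_enum.
- rewrite mem_iota add0n => /andP[_ j_lt]; apply/Forall_mapP => a _.
  by apply/qsat_letter; rewrite (pre j j_lt).
Qed.

End Semantics.

Section PhiPrime.
Variables (AP : finType) (k : nat) (ts : seq (ftrace AP)) (psi : qf AP).

Definition phi_prime_matrix : qf AP :=
  foldr (@QAnd AP) psi
    (flatten [seq prefix_conjuncts (k + i) (nth [::] ts i) | i <- iota 0 (size ts)]).

Lemma phi_primeE : phi_prime k ts psi =
  foldr (@HEx AP) (foldr (@HAll AP) (HQF phi_prime_matrix) (iota 0 k)) (iota k (size ts)).
Proof. by []. Qed.

Lemma qsat_phi_prime_matrix (Pi : assignment AP) (W : nat -> trace AP) :
  (forall i, i < size ts -> Pi (k + i) = Some (W i)) ->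
  qsat Pi phi_prime_matrix <->
  (forall i, i < size ts -> is_prefix (nth [::] ts i) (W i)) /\ qsat Pi psi.
Proof.
move=> Pi_W; rewrite qsat_foldr_and Forall_flatten Forall_mapP.
split=> -[pre Hpsi]; split=> // i.
- move=> i_lt; apply/(qsat_prefix_conjuncts _ (Pi_W i i_lt)).
  by apply: pre; rewrite mem_iota.
- rewrite mem_iota add0n => /andP[_ i_lt].
  by apply/(qsat_prefix_conjuncts _ (Pi_W i i_lt)); apply: pre.
Qed.

Lemma fle_choice (T : tset AP) t0 : T t0 -> fle ts T ->
  exists W : nat -> trace AP,
    forall i, T (W i) /\ (i < size ts -> is_prefix (nth [::] ts i) (W i)).
Proof.
move=> Tt0 ext.
apply: (functional_choice
          (fun i t => T t /\ (i < size ts -> is_prefix (nth [::] ts i) t))) => i.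
have [i_lt|] := ltnP i (size ts); last by exists t0; split=> //; lia.
by have [t' [Tt' pre]] := ext _ (mem_nth [::] i_lt); exists t'.
Qed.

Lemma satisfies_phi_prime (T : tset AP) : vars_lt k psi -> (exists t, T t) ->
  satisfies T (phi_prime k ts psi) <-> fle ts T /\ satisfies T (univ_formula k psi).
Proof.
move=> psi_lt [t0 Tt0].
have matrixE w' w :
    qsat (upd_range (upd_range (empty_assignment AP) k (size ts) w') 0 k w)
      phi_prime_matrix <->
    (forall i, i < size ts -> is_prefix (nth [::] ts i) (w' (k + i))) /\
    qsat (upd_range (empty_assignment AP) 0 k w) psi.
  rewrite (@qsat_phi_prime_matrix _ (fun i => w' (k + i))) => [|i i_lt]; last first.
    by rewrite /upd_range; case: ifP => [|_]; [lia | case: ifP => //; lia].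
  suff -> : qsat (upd_range (upd_range (empty_assignment AP) k (size ts) w') 0 k w) psi <->
            qsat (upd_range (empty_assignment AP) 0 k w) psi by [].
  by apply: (qsat_eq_vars_lt psi_lt) => x x_lt; rewrite /upd_range add0n x_lt.
rewrite /satisfies phi_primeE hsat_exists; split.
- move=> [w' [Tw' /hsat_foralls Hmat]]; split.
    move=> t /(nthP [::]) [i i_lt <-]; exists (w' (k + i)).
    split; first by apply: Tw'; rewrite leq_addr ltn_add2l.
    by have [pre _] := (matrixE w' (fun _ => t0)).1 (Hmat _ (fun _ _ => Tt0)); apply: pre.
  by apply/hsat_foralls => w Tw; have [] := (matrixE w' w).1 (Hmat w Tw).
- move=> [ext /hsat_foralls Hpsi]; have [W HW] := fle_choice Tt0 ext.
  exists (fun x => W (x - k)); split=> [x _|]; first exact: (HW _).1.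
  apply/hsat_foralls => w Tw; apply/matrixE; split=> [i i_lt|]; last exact: Hpsi.
  by rewrite addKn; apply: (HW i).2.
Qed.

End PhiPrime.

Theorem theorem9 (AP : finType) (ts : seq (ftrace AP)) (k : nat) (psi : qf AP) :
  0 < size ts ->
  universally_safe k psi ->
  (Bad (lang (univ_formula k psi)) ts <-> ~ satisfiable (phi_prime k ts psi)).
Proof.
move=> ts_gt0 [psi_lt _]; rewrite /Bad /satisfiable /lang; split.
- by move=> bad [T [T_ne /(satisfies_phi_prime _ psi_lt T_ne) [ext sat]]]; apply: bad ext sat.
- move=> unsat T ext sat; apply: unsat; exists T.
  have T_ne : exists t, T t by have [t [Tt _]] := ext _ (mem_nth [::] ts_gt0); exists t.
  by split=> //; apply/(satisfies_phi_prime _ psi_lt T_ne).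
Qed.
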